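(* Let $G$ be a finite nonabelian group with $Z(G)\neq 1$ and $G\in\mathcal{D}_n$. Then one of the following holds: (1) $Z(G)\in\mathcal{D}_{n-k}$ for some integer $k\ge 4$; (2) $G=KH$ where $K\trianglelefteq G$ has prime order $p$, $H$ is a cyclic subgroup of order $q^2$ for a prime $q$ dividing $p-1$, and $C_H(K)=Z(G)$ has order $q$; in this case $G\in\mathcal{D}_3$ and $Z(G)\in\mathcal{D}_0$.
   Context: $\mathcal{D}(X)$ denotes the number of conjugacy classes of nontrivial subgroups $Y$ of the finite group $X$ with $N_X(Y)\neq Y$; $\mathcal{D}_n$ is the family of finite groups $X$ with $\mathcal{D}(X)=n$. $Z(G)$ is the center of $G$. *)

From mathcomp Require Import all_boot all_fingroup all_solvable.
Set Implicit Arguments. Unset Strict Implicit. Unset Printing Implicit Defensive.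
Local Open Scope group_scope.

Definition nonselfnorm_subgroups (gT : finGroupType) (X : {set gT}) : {set {set gT}} :=
  [set Y : {set gT} | [&& group_set Y, Y \subset X, Y != 1 & 'N_X(Y) != Y]].

Definition Dnum (gT : finGroupType) (X : {set gT}) : nat :=
  #|[set Y :^: X | Y in nonselfnorm_subgroups X]|.

From mathcomp Require Import all_boot all_fingroup all_solvable.
From mathcomp Require integral_char vcharacter.
Set Implicit Arguments. Unset Strict Implicit. Unset Printing Implicit Defensive.
Local Open Scope group_scope.

(* Subgroups of Z(G) are normal in G, so D(G) = D(Z(G)) + 1 + c(G), where c(G) counts the
   G-classes of non-self-normalizing subgroups not contained in Z(G) (the 1 is Z(G) itself).
   If c(G) >= 3 we are in case (1).  If c(G) <= 2, G cannot be nilpotent (it would have three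
   normal maximal subgroups outside Z(G)).  If some prime s of |G : Z(G)| has no s-subgroup
   among the counted classes, a Sylow s-subgroup P is self-normalizing and TI modulo Z(G), so
   G/Z(G) is a Frobenius group with complement P/Z(G); Schur-Zassenhaus inside the preimage
   of its kernel gives a normal subgroup K of prime order with K :&: Z(G) = 1.  If every such
   prime has a witness, Burnside's p^a q^b theorem makes G solvable and the Fitting subgroup,
   compared with the witnesses, leads to a contradiction.  Given K, the only counted classes
   are K and K Z(G); this forces |Z(G)| = q prime, a cyclic Sylow q-subgroup H of order q^2
   with K H = G and C_H(K) = Z(G), q | p - 1 and c(G) = 2. *)

Definition nsn_noncentral (gT : finGroupType) (G : {set gT}) : {set {set gT}} :=
  [set Y in nonselfnorm_subgroups G | ~~ (Y \subset 'Z(G))].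

Definition Dnum_noncentral (gT : finGroupType) (G : {set gT}) : nat :=
  #|[set Y :^: G | Y in nsn_noncentral G]|.

Section NonselfnormSubgroups.

Variable gT : finGroupType.

Lemma mem_nonselfnorm (X H : {group gT}) :
  (gval H \in nonselfnorm_subgroups X) = [&& H \subset X, H :!=: 1 & 'N_X(H) != H].
Proof. by rewrite inE groupP. Qed.

Lemma mem_nsn_noncentral (G H : {group gT}) :
  (gval H \in nsn_noncentral G) = [&& H \subset G, ~~ (H \subset 'Z(G)) & 'N_G(H) != H].
Proof.
rewrite inE mem_nonselfnorm; have [sHZ | nsHZ] := boolP (H \subset 'Z(G)).
  by rewrite !andbF.
suff -> : H :!=: 1 by rewrite andbT.
by apply: contraNneq nsHZ => ->; apply: sub1G.
Qed.

Lemma nsn_noncentral_group (G : {group gT}) (Y : {set gT}) :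
  Y \in nsn_noncentral G -> group_set Y.
Proof. by rewrite !inE => /andP[/and4P[]]. Qed.

Lemma nsn_noncentral_card_gt1 (G H : {group gT}) :
  gval H \in nsn_noncentral G -> 1 < #|H|.
Proof.
rewrite mem_nsn_noncentral ltnNge -trivg_card_le1 => /and3P[_ nsHZ _].
by apply: contra nsHZ => /eqP->; apply: sub1G.
Qed.

Lemma center_sub_normalizer (G H : {group gT}) :
  H \subset G -> 'Z(G) \subset 'N_G(H).
Proof.
move=> sHG; rewrite subsetI center_sub (subset_trans _ (cent_sub H)) //.
by rewrite centsC (subset_trans sHG) // centsC subsetIr.
Qed.

Lemma nsn_noncentral_proper_norm (G H : {group gT}) :
  H \subset G -> ~~ (H \subset 'Z(G)) -> H \proper 'N_G(H) -> gval H \in nsn_noncentral G.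
Proof.
move=> sHG nsHZ ltHN; rewrite mem_nsn_noncentral sHG nsHZ /=.
by apply: contraTneq ltHN => ->; rewrite properE subxx.
Qed.

Lemma nsn_noncentral_normal (G H : {group gT}) :
  H <| G -> H :!=: G -> ~~ (H \subset 'Z(G)) -> gval H \in nsn_noncentral G.
Proof.
by case/andP=> sHG nHG neHG nsHZ; rewrite mem_nsn_noncentral sHG nsHZ (setIidPl nHG) eq_sym.
Qed.

Lemma subcent_nsn_noncentral (G L : {group gT}) :
  L <| G -> abelian L -> ~~ (L \subset 'Z(G)) ->
  [/\ 'C_G(L) <| G, L \subset 'C_G(L) & gval 'C_G(L)%G \in nsn_noncentral G].
Proof.
move=> nsLG abL nsLZ; have sLG := normal_sub nsLG.
have nsCG : 'C_G(L) <| G by rewrite -{2}(setIidPl (normal_norm nsLG)) subcent_normal.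
have sLC : L \subset 'C_G(L) by rewrite subsetI sLG.
split=> //; apply: nsn_noncentral_normal nsCG _ (contra (subset_trans sLC) nsLZ).
by apply: contra nsLZ => /eqP eqCG; rewrite subsetI sLG centsC -{1}eqCG subsetIr.
Qed.

Lemma nsn_noncentral_center_nsub (G H : {group gT}) :
  H \subset G -> ~~ (H \subset 'Z(G)) -> ~~ ('Z(G) \subset H) -> gval H \in nsn_noncentral G.
Proof.
move=> sHG nsHZ nsZH; rewrite mem_nsn_noncentral sHG nsHZ /=.
by apply: contraNneq nsZH => <-; apply: center_sub_normalizer.
Qed.

Lemma nsn_noncentral_nil (G H R : {group gT}) :
  H \proper R -> R \subset G -> nilpotent R -> ~~ (H \subset 'Z(G)) ->
  gval H \in nsn_noncentral G.
Proof.
move=> ltHR sRG nilR nsHZ; have sHG := subset_trans (proper_sub ltHR) sRG.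
apply: nsn_noncentral_proper_norm => //.
exact: proper_sub_trans (nilpotent_proper_norm nilR ltHR) (setSI _ sRG).
Qed.

Lemma card_conj_class_eq (G : {group gT}) (Y1 Y2 : {set gT}) :
  Y1 :^: G = Y2 :^: G -> #|Y1| = #|Y2|.
Proof.
move=> eqY; have: Y2 \in Y1 :^: G by rewrite eqY -{1}(conjsg1 Y2) imset_f.
by case/imsetP=> x _ ->; rewrite cardJg.
Qed.

Lemma conj_class_normal (G H : {group gT}) (Y : {set gT}) :
  H <| G -> gval H :^: G = Y :^: G -> Y = H.
Proof.
move=> /andP[_ nHG] eqY; have: Y \in gval H :^: G by rewrite eqY -{1}(conjsg1 Y) imset_f.
by case/imsetP=> x Gx ->; apply: (normsP nHG).
Qed.

Lemma conj_class_norm (X : {group gT}) (Y : {set gT}) :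
  X \subset 'N(Y) -> Y :^: X = [set Y].
Proof.
move=> nYX; apply/setP=> W; rewrite inE; apply/imsetP/eqP => [[x Xx ->]|->].
  exact: (normsP nYX).
by exists 1; rewrite ?group1 ?conjsg1.
Qed.

Lemma Dnum_noncentral_le2_conj (G : {group gT}) (Y1 Y2 Y3 : {set gT}) :
  Dnum_noncentral G <= 2 ->
  Y1 \in nsn_noncentral G -> Y2 \in nsn_noncentral G -> Y3 \in nsn_noncentral G ->
  [|| Y1 :^: G == Y2 :^: G, Y1 :^: G == Y3 :^: G | Y2 :^: G == Y3 :^: G].
Proof.
move=> le2 S1 S2 S3; apply: contraLR le2; rewrite !negb_or -ltnNge.
case/and3P=> ne12 ne13 ne23; rewrite /Dnum_noncentral.
apply: leq_trans (subset_leq_card (_ : Y1 :^: G |: [set Y2 :^: G; Y3 :^: G] \subset _)).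
  by rewrite cardsU1 cards2 !inE negb_or ne12 ne13 ne23.
by apply/subsetP=> X; rewrite !inE => /or3P[] /eqP->; apply: imset_f.
Qed.

Lemma Dnum_abelian (X : {group gT}) :
  abelian X -> Dnum X = #|nonselfnorm_subgroups X|.
Proof.
move=> abX; rewrite /Dnum -[RHS](card_imset _ (@set1_inj _)).
suff -> : [set Y :^: X | Y in nonselfnorm_subgroups X] =
          [set [set Y] | Y in nonselfnorm_subgroups X] by [].
apply: eq_in_imset => Y; rewrite inE => /and4P[_ sYX _ _].
exact/conj_class_norm/cents_norm/(centsS sYX abX).
Qed.

Lemma Dnum_prime (X : {group gT}) : prime #|X| -> Dnum X = 0.
Proof.
move=> pX; apply/eqP; rewrite cards_eq0 imset_eq0; apply/eqP/setP=> Y.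
rewrite !inE; apply/negP=> /and4P[gY sYX ntY nYX].
have [sXY | tiYX] := prime_subgroupVti (Group gY) pX.
  have eqYX : Y = X by apply/eqP; rewrite eqEsubset sYX.
  by move: nYX; rewrite eqYX (setIidPl (normG X)) eqxx.
by move: ntY; rewrite -[Y]/(gval (Group gY)) -subG1 -tiYX subsetI subxx sYX.
Qed.

End NonselfnormSubgroups.

Section CenterSplit.

Variables (gT : finGroupType) (G : {group gT}).
Hypotheses (neZG : 'Z(G) :!=: G) (ntZ : 'Z(G) :!=: 1).

Let Z := 'Z(G).

Let sub_center_norm (Y : {set gT}) : Y \subset Z -> G \subset 'N(Y).
Proof.
move=> sYZ; apply/cents_norm; rewrite centsC (subset_trans sYZ) //.
by rewrite subsetIr.
Qed.

Lemma nonselfnorm_subgroups_center_split :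
  nonselfnorm_subgroups G = nonselfnorm_subgroups Z :|: [set gval Z] :|: nsn_noncentral G.
Proof.
apply/setP=> Y; rewrite !inE; have [sYZ | nsYZ] := boolP (Y \subset Z); last first.
  rewrite andbF /= andbT; suff -> : (Y == Z) = false by [].
  by apply: contraNF nsYZ => /eqP->.
have nYZ : Z \subset 'N(Y) := subset_trans (center_sub G) (sub_center_norm sYZ).
rewrite andbF orbF (setIidPl (sub_center_norm sYZ)) (setIidPl nYZ).
rewrite (subset_trans sYZ (center_sub G)) /=.
have [-> | neYZ] := eqVneq Y Z; first by rewrite groupP ntZ eq_sym neZG.
have -> : (G : {set gT}) != Y.
  by apply: contraNneq neZG => eqGY; move: sYZ; rewrite -eqGY eqEsubset center_sub.
by rewrite orbF.
Qed.

Lemma Dnum_center_split : Dnum G = Dnum Z + 1 + Dnum_noncentral G.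
Proof.
set C := nonselfnorm_subgroups Z :|: [set gval Z].
have sCZ Y : Y \in C -> Y \subset Z.
  by rewrite !inE => /orP[/and4P[] | /eqP->].
have classC : {in C, forall Y, Y :^: G = [set Y]}.
  by move=> Y /sCZ sYZ; apply/conj_class_norm/sub_center_norm.
have cardC : #|[set Y :^: G | Y in C]| = Dnum Z + 1.
  rewrite (eq_in_imset classC) card_imset; last exact: set1_inj.
  rewrite Dnum_abelian ?center_abelian // /C setUC cardsU1 addnC inE.
  by rewrite (setIidPl (normG Z)) eqxx !andbF.
have disjC : [disjoint [set Y :^: G | Y in C] & [set Y :^: G | Y in nsn_noncentral G]].
  apply/pred0P=> W /=; apply/andP=> -[/imsetP[Y CY ->] /imsetP[Y' SY' eqYY']].
  have : Y' \in Y :^: G by rewrite eqYY' -{1}(conjsg1 Y') imset_f.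
  rewrite classC // inE => /eqP eqY'Y; move: SY'.
  by rewrite eqY'Y inE sCZ ?andbF.
rewrite /Dnum nonselfnorm_subgroups_center_split -/C imsetU.
by move: disjC; rewrite -(leq_card_setU _ _).2 => /eqP->; rewrite cardC.
Qed.

End CenterSplit.

Section NilpotentGroups.

Variable gT : finGroupType.

Lemma proper_subgroups_not_cover (G H1 H2 : {group gT}) :
  H1 \proper G -> H2 \proper G -> exists2 g, g \in G & (g \notin H1) && (g \notin H2).
Proof.
move=> /properP[_ [a Ga H1'a]] /properP[_ [b Gb H2'b]].
have [H2a | H2'a] := boolP (a \in H2); last by exists a; rewrite ?H1'a.
have [H1b | H1'b] := boolP (b \in H1); last by exists b; rewrite ?H1'b.
by exists (a * b); [rewrite groupM | rewrite groupMr // H1'a groupMl].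
Qed.

Lemma nilpotent_maximal_nsn_noncentral (G M : {group gT}) :
  ~~ abelian G -> nilpotent G -> maximal M G -> M <| G /\ gval M \in nsn_noncentral G.
Proof.
move=> nabG nilG maxM; have ltMG : M \proper G := maxgroupp maxM.
have eqM (H : {group gT}) : H \proper G -> M \subset H -> H :=: M.
  by case/maxgroupP: maxM => _; apply.
have nsMG : M <| G.
  have ltMN := nilpotent_proper_norm nilG ltMG.
  rewrite /normal (proper_sub ltMG); apply: contraTT (ltMN) => nMG.
  have ltNG : 'N_G(M) \proper G.
    by rewrite properEneq subsetIl andbT; apply: contraNneq nMG => <-; apply: subsetIr.
  by rewrite (eqM _ ltNG (proper_sub ltMN)) properE subxx.
split=> //; apply: nsn_noncentral_normal (proper_neq ltMG) _ => //.
apply/negP=> sMZ; have /properP[_ [g Gg M'g]] := ltMG.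
have ltZG : 'Z(G) \proper G.
  by rewrite properEneq center_sub andbT; apply: contraNneq nabG => <-; apply: center_abelian.
have sZgG : 'Z(G) <*> <[g]> \subset G by rewrite join_subG center_sub cycle_subG.
have ltZgG : ('Z(G) <*> <[g]>)%G \proper G.
  rewrite properEneq sZgG andbT; apply: contraNneq nabG => <-.
  rewrite abelianY center_abelian cycle_abelian cycle_subG /=.
  by apply: (subsetP _ g Gg); rewrite centsC subsetIr.
have eqMZ : gval M = 'Z(G) by rewrite (eqM _ ltZG sMZ).
case/negP: M'g; rewrite -(eqM _ ltZgG) ?eqMZ ?joing_subl //.
by rewrite mem_gen // inE cycle_id orbT.
Qed.

Lemma nilpotent_Dnum_noncentral_gt2 (G : {group gT}) :
  ~~ abelian G -> nilpotent G -> 2 < Dnum_noncentral G.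
Proof.
move=> nabG nilG; rewrite ltnNge; apply/negP=> small.
have ltcG g : g \in G -> <[g]>%G \proper G.
  move=> Gg; rewrite properEneq cycle_subG Gg andbT.
  by apply: contraNneq nabG => <-; apply: cycle_abelian.
have lt1G : 1%G \proper G by rewrite proper1G; apply: contraNneq nabG => ->; apply: abelian1.
have maxE (H : {group gT}) (ltHG : H \proper G) :=
  @maxgroup_exists _ (fun M : {group gT} => M \proper G) _ ltHG.
have [M1 maxM1 _] := maxE _ lt1G.
have /properP[_ [g1 Gg1 M1'g1]] := maxgroupp maxM1.
have [M2 maxM2 sg1M2] := maxE _ (ltcG g1 Gg1).
have [g2 Gg2 /andP[M1'g2 M2'g2]] :=
  proper_subgroups_not_cover (maxgroupp maxM1) (maxgroupp maxM2).
have [M3 maxM3 sg2M3] := maxE _ (ltcG g2 Gg2).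
have [nsM1 S1] := nilpotent_maximal_nsn_noncentral nabG nilG maxM1.
have [nsM2 S2] := nilpotent_maximal_nsn_noncentral nabG nilG maxM2.
have [_ S3] := nilpotent_maximal_nsn_noncentral nabG nilG maxM3.
rewrite cycle_subG in sg1M2; rewrite cycle_subG in sg2M3.
case/or3P: (Dnum_noncentral_le2_conj small S1 S2 S3) => /eqP/(conj_class_normal _) eqM.
- by rewrite -(eqM nsM1) sg1M2 in M1'g1.
- by rewrite -(eqM nsM1) sg2M3 in M1'g2.
- by rewrite -(eqM nsM2) sg2M3 in M2'g2.
Qed.

End NilpotentGroups.

Lemma mem_quotient_normal (gT : finGroupType) (Z X : {group gT}) (x : gT) :
  Z <| X -> x \in 'N(Z) -> (coset Z x \in X / Z) = (x \in X).
Proof.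
move=> nsZX Nx; have /setP/(_ x) := quotientGK nsZX.
by rewrite morphpreE in_setI Nx inE.
Qed.

Section FrobeniusModCenter.

Variables (gT : finGroupType) (G X : {group gT}).
Hypotheses (sZX : 'Z(G) \subset X) (sXG : X \subset G).
Hypotheses (neXG : X :!=: G) (neZX : 'Z(G) :!=: X).
Hypothesis tiX : forall g, g \in G -> g \notin X -> X :&: X :^ g \subset 'Z(G).

Let nZG : G \subset 'N('Z(G)) := normal_norm (center_normal G).
Let nsZX : 'Z(G) <| X := normalS sZX sXG (center_normal G).

Lemma memJ_TI_center x y :
  x \in X -> x \notin 'Z(G) -> y \in G -> (x ^ y \in X) = (y \in X).
Proof.
move=> Xx Z'x Gy; have [Xy | X'y] := boolP (y \in X); first by rewrite groupJ.
apply: contraNF Z'x => Xxy; have: x ^ y \in X :&: X :^ y by rewrite inE Xxy memJ_conjg.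
by move/(subsetP (tiX Gy X'y)); rewrite memJ_norm ?(subsetP nZG).
Qed.

Lemma Frobenius_quotient_center : [Frobenius (G / 'Z(G)) with complement (X / 'Z(G))].
Proof.
apply/andP; split.
  by apply: contra neXG => /eqP/(quotient_inj nsZX (center_normal G))->.
apply/normedTI_memJ_P; split.
- rewrite setD_eq0 quotient_sub1 ?(subset_trans sXG nZG) //.
  by apply: contra neZX => sXZ; rewrite eqEsubset sZX.
- exact: quotientS.
move=> a g /setD1P[ntxZ /morphimP[x Nx Xx def_a]] /morphimP[y Ny Gy def_g]; subst a g.
have Z'x : x \notin 'Z(G) by apply: contra ntxZ => /coset_id /eqP.
rewrite -morphJ // !inE /= (mem_quotient_normal nsZX (groupJ Nx Ny)).
rewrite (mem_quotient_normal nsZX Ny) memJ_TI_center //.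
suff -> : coset 'Z(G) (x ^ y) != 1 by [].
apply: contra Z'x => /eqP/coset_idr; rewrite groupJ // => /(_ isT).
by rewrite memJ_norm ?(subsetP nZG).
Qed.

Lemma center_normal_complement :
  exists N : {group gT}, [/\ N <| G, N :&: X = 'Z(G) & N * X = G].
Proof.
have [Kb /andP[/eqP defG _]] := vcharacter.Frobenius_kernel_exists Frobenius_quotient_center.
have [nsKbG _ defKbX _ tiKbX] := sdprod_context defG.
exists (coset 'Z(G) @*^-1 Kb)%G; split.
- by rewrite -[X in _ <| X](quotientGK (center_normal G)) cosetpre_normal.
- by rewrite /= -(quotientGK nsZX) -morphpreI tiKbX; apply: ker_coset.
- by rewrite /= -(quotientGK nsZX) -cosetpreM defKbX quotientGK ?center_normal.
Qed.

End FrobeniusModCenter.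

Lemma center_Hall_normal_complement (gT : finGroupType) (G N : {group gT}) :
  N <| G -> Hall N 'Z(G) ->
  exists M : {group gT}, [/\ M <| G, M :&: 'Z(G) = 1 & 'Z(G) * M = N].
Proof.
move=> nsNG hallZ; have /andP[sZN coZ] := hallZ.
have sNG := normal_sub nsNG.
have nsZN : 'Z(G) <| N := normalS sZN sNG (center_normal G).
have [M /complP[tiZM defN]] := splitsP (SchurZassenhaus_split hallZ nsZN).
have sMN : M \subset N by rewrite -defN mulG_subr.
have oN : #|N| = (#|'Z(G)| * #|M|)%N by rewrite -defN TI_cardMg.
have oM : #|M| = #|N : 'Z(G)|.
  by apply/eqP; rewrite -(eqn_pmul2l (cardG_gt0 'Z(G))) Lagrange // oN.
have iM : #|N : M| = #|'Z(G)|.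
  by apply/eqP; rewrite -(eqn_pmul2l (cardG_gt0 M)) Lagrange // oN mulnC.
have nsMN : M <| N.
  have nMZ : 'Z(G) \subset 'N(M).
    by rewrite (subset_trans (center_sub_normalizer (subset_trans sMN sNG))) ?subsetIr.
  by rewrite /normal sMN -defN mul_subG ?normG.
have hallM : \pi(#|'Z(G)|)^'.-Hall(N) M.
  by rewrite /pHall sMN /pgroup oM -coprime_pi' ?cardG_gt0 // iM coZ pnatNK pnat_pi.
exists M; split; last by [].
- rewrite -(normal_Hall_pcore hallM nsMN).
  exact: char_normal_trans (pcore_char _ _) nsNG.
- by rewrite setIC.
Qed.

Lemma solvable_Fitting_noncentral (gT : finGroupType) (G : {group gT}) :
  solvable G -> ~~ abelian G -> ~~ ('F(G) \subset 'Z(G)).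
Proof.
move=> solG nabG; have nsGZ : ~~ (G \subset 'Z(G)).
  by apply: contra nabG => sGZ; apply: abelianS sGZ (center_abelian G).
have derZ : exists n, G^`(n) \subset 'Z(G).
  by case/derivedP: solG => n derG1; exists n; rewrite derG1 sub1G.
have [m derZm minm] := ex_minnP derZ.
have m_gt0 : 0 < m by case: m derZm {minm} => //; rewrite derg0 (negbTE nsGZ).
have nsDZ : ~~ (G^`(m.-1) \subset 'Z(G)).
  by apply/negP=> /minm; rewrite -ltnS prednK // ltnn.
have nilD : nilpotent G^`(m.-1).
  apply: small_nil_class; apply: leq_trans (_ : 2 <= 5) => //.
  rewrite nil_class2 subsetI der_sub derg1 -dergSn prednK //= (subset_trans derZm) //.
  by rewrite (subset_trans (subsetIr G _)) // centS // der_sub.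
apply: contra nsDZ; apply: subset_trans; exact: Fitting_max (der_normal _ _) nilD.
Qed.

Section PrimeOrders.

Variable gT : finGroupType.

Lemma prime_card_of_subgroups (X : {group gT}) :
  X :!=: 1 -> (forall Y : {group gT}, Y \subset X -> Y :=: 1 \/ Y :=: X) -> prime #|X|.
Proof.
move=> ntX dichX; have gt1X : 1 < #|X| by rewrite ltnNge -trivg_card_le1.
have [x Xx ox] := Cauchy (pdiv_prime gt1X) (pdiv_dvd _).
have := pdiv_prime gt1X; rewrite -ox orderE.
by case: (dichX <[x]>%G); rewrite ?cycle_subG // => ->; rewrite ?cards1.
Qed.

Lemma nsn_noncentral_TI_center (G Y : {group gT}) :
  Y \subset G -> Y :!=: 1 -> 'Z(G) :!=: 1 -> Y :&: 'Z(G) = 1 -> gval Y \in nsn_noncentral G.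
Proof.
move=> sYG ntY ntZ tiYZ; apply: nsn_noncentral_center_nsub => //.
  by apply: contra ntY => sYZ; rewrite -tiYZ (setIidPl sYZ).
by apply: contra ntZ => sZY; rewrite -tiYZ (setIidPr sZY).
Qed.

Lemma pnat_prime_eq (n s t : nat) : 1 < n -> s.-nat n -> t.-nat n -> s = t.
Proof.
move=> gt1n sn tn; have pi_n := pi_pdiv n; rewrite gt1n in pi_n.
by move: (pnatPpi sn pi_n) (pnatPpi tn pi_n); rewrite !inE => /eqP <- /eqP.
Qed.

Lemma nsn_noncentral_conj_pgroup (G Y1 Y2 : {group gT}) (s t : nat) :
  gval Y1 \in nsn_noncentral G -> s.-group Y1 -> t.-group Y2 -> s != t ->
  (gval Y1 :^: G == gval Y2 :^: G) = false.
Proof.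
move=> S1 sY1 tY2; apply: contraNF => /eqP/card_conj_class_eq eqY.
rewrite /pgroup eqY in sY1; apply/eqP/(pnat_prime_eq _ sY1 tY2).
by rewrite -eqY; apply: nsn_noncentral_card_gt1 S1.
Qed.

End PrimeOrders.

Section FewNoncentralClasses.

Variables (gT : finGroupType) (G : {group gT}).
Hypotheses (nabG : ~~ abelian G) (ntZ : 'Z(G) :!=: 1).
Hypothesis small : Dnum_noncentral G <= 2.

Lemma not_nilpotent_few_classes : ~~ nilpotent G.
Proof.
by apply/negP=> nilG; move: (nilpotent_Dnum_noncentral_gt2 nabG nilG); rewrite ltnNge small.
Qed.

Lemma normal_TI_center_prime (M N : {group gT}) :
  M <| G -> M :!=: 1 -> M :&: 'Z(G) = 1 ->
  N <| G -> 'Z(G) \subset N -> gval N \in nsn_noncentral G -> prime #|M|.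
Proof.
move=> nsMG ntM tiMZ nsNG sZN SN; have sMG := normal_sub nsMG.
have nsubN (Y : {group gT}) : Y \subset M -> gval Y != N.
  move=> sYM; apply: contra ntZ => /eqP eqYN.
  by rewrite -subG1 -tiMZ subsetI subxx (subset_trans sZN) // -eqYN.
apply: (prime_card_of_subgroups ntM) => Y sYM; have [-> | ntY] := eqVneq Y 1%G; first by left.
right; have tiYZ : Y :&: 'Z(G) = 1 by apply/trivgP; rewrite -tiMZ setSI.
have SY := nsn_noncentral_TI_center (subset_trans sYM sMG) ntY ntZ tiYZ.
have SM := nsn_noncentral_TI_center sMG ntM ntZ tiMZ.
case/or3P: (Dnum_noncentral_le2_conj small SY SM SN) => /eqP eqYG.
- exact: conj_class_normal nsMG (esym eqYG).
- by case/eqP: (nsubN Y sYM); rewrite (conj_class_normal nsNG (esym eqYG)).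
- by case/eqP: (nsubN M (subxx M)); rewrite (conj_class_normal nsNG (esym eqYG)).
Qed.

Section SylowWithoutWitness.

Variables (s : nat) (P : {group gT}).
Hypotheses (sylP : s.-Sylow(G) P) (nsPZ : ~~ (P \subset 'Z(G))).
Hypothesis no_witness : forall Y, Y \in nsn_noncentral G -> ~~ s.-group Y.

Lemma Sylow_TI_center :
  [/\ 'Z(G) \subset P, P :!=: G, 'Z(G) :!=: P
    & forall g, g \in G -> g \notin P -> P :&: P :^ g \subset 'Z(G)].
Proof.
have /and3P[sPG sP _] := sylP.
have nPG : 'N_G(P) = P.
  apply/eqP; apply: contraTT sP => neNP; apply: no_witness.
  by apply: nsn_noncentral_proper_norm; rewrite // properEneq eq_sym neNP subsetI sPG normG.
have sZP : 'Z(G) \subset P by rewrite -nPG center_sub_normalizer.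
have genP x : x \in P -> x \notin 'Z(G) -> <[x]> = P :> {set gT}.
  move=> Px Z'x; apply/eqP; rewrite eqEproper cycle_subG Px; apply/negP=> ltxP.
  have := no_witness (nsn_noncentral_nil ltxP sPG (pgroup_nil sP) _).
  by rewrite cycle_subG Z'x (pgroupS _ sP) ?cycle_subG // => /(_ isT).
split=> //.
- by apply: contra not_nilpotent_few_classes => /eqP <-; apply: pgroup_nil sP.
- by apply: contraNneq nsPZ => <-.
move=> g Gg P'g; apply/subsetP=> x /setIP[Px Pgx]; apply/negPn/negP=> Z'x.
case/negP: P'g; rewrite -nPG inE Gg; apply/normP/eqP.
by rewrite eq_sym eqEcard cardJg leqnn andbT -{1}(genP x Px Z'x) cycle_subG.
Qed.

Lemma Sylow_no_witness_normal_prime :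
  exists K : {group gT}, [/\ K <| G, prime #|K| & K :&: 'Z(G) = 1].
Proof.
have /and3P[sPG sP s'iP] := sylP.
have [sZP nePG neZP tiP] := Sylow_TI_center.
have [N [nsNG tiNP defG]] := center_normal_complement sZP sPG nePG neZP tiP.
have sZN : 'Z(G) \subset N by rewrite -tiNP subsetIl.
have iNZ : #|N : 'Z(G)| = #|G : P|.
  apply/eqP; rewrite -(eqn_pmul2l (cardG_gt0 'Z(G))) Lagrange //.
  rewrite -(eqn_pmul2r (cardG_gt0 P)) mul_cardG defG tiNP -mulnA.
  by rewrite (mulnC #|G : P|) Lagrange // mulnC.
have hallZ : Hall N 'Z(G) by rewrite /Hall sZN iNZ (pnat_coprime (pgroupS sZP sP)).
have [M [nsMG tiMZ defN]] := center_Hall_normal_complement nsNG hallZ.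
have ntM : M :!=: 1.
  by apply: contra nePG => /eqP M1; rewrite -defG -defN M1 mulg1 (mulSGid sZP).
exists M; split => //; apply: (normal_TI_center_prime nsMG ntM tiMZ nsNG sZN).
apply: nsn_noncentral_normal nsNG _ _.
  by apply: contra neZP => /eqP eqNG; rewrite -tiNP eqNG (setIidPr sPG).
apply: contra ntM => sNZ; rewrite -subG1 -tiMZ subsetI subxx (subset_trans _ sNZ) //.
by rewrite -defN mulG_subr.
Qed.

End SylowWithoutWitness.

Section NormalNilpotentPgroup.

Variables (s t : nat) (L Y : {group gT}).
Hypotheses (neq_st : s != t) (nsLG : L <| G) (nilL : nilpotent L) (sZL : 'Z(G) \subset L).
Hypotheses (SL : gval L \in nsn_noncentral G) (sL : s.-group L).
Hypotheses (SY : gval Y \in nsn_noncentral G) (tY : t.-group Y).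

Let sLG : L \subset G := normal_sub nsLG.

Let t_pr_dvd : prime t /\ t %| #|Y|.
Proof.
have ntY : Y :!=: 1 by rewrite -cardG_gt1 (nsn_noncentral_card_gt1 SY).
by have [] := pgroup_pdiv tY ntY.
Qed.

Lemma normal_nil_pgroup_proper_sub (R : {group gT}) : R \proper L -> R \subset 'Z(G).
Proof.
move=> ltRL; apply/negPn/negP=> nsRZ.
have SR := nsn_noncentral_nil ltRL sLG nilL nsRZ.
have sR := pgroupS (proper_sub ltRL) sL.
case/or3P: (Dnum_noncentral_le2_conj small SR SL SY) => eqRG.
- by move: ltRL; rewrite (conj_class_normal nsLG (esym (eqP eqRG))) properE subxx.
- by rewrite (nsn_noncentral_conj_pgroup SR sR tY neq_st) in eqRG.
- by rewrite (nsn_noncentral_conj_pgroup SL sL tY neq_st) in eqRG.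
Qed.

Lemma normal_nil_pgroup_abelian : abelian L.
Proof.
have [x Lx Z'x] : exists2 x, x \in L & x \notin 'Z(G).
  by apply/subsetPn; move: SL; rewrite mem_nsn_noncentral => /and3P[].
suff <- : <[x]> = L :> {set gT} by apply: cycle_abelian.
apply/eqP; rewrite eqEproper cycle_subG Lx; apply/negP=> ltxL.
by case/negP: Z'x; rewrite -cycle_subG normal_nil_pgroup_proper_sub.
Qed.

Lemma normal_nil_pgroup_cent (y : gT) : y \in G -> #[y] = t -> y \in 'C(L).
Proof.
move=> Gy oy; have [t_pr _] := t_pr_dvd.
have nLy : <[y]> \subset 'N(L) by rewrite cycle_subG (subsetP (normal_norm nsLG)).
have coLy : coprime #|L| #|<[y]>|.
  by rewrite -orderE oy (pnat_coprime sL) // pnatE // !inE eq_sym.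
have tiLy := coprime_abel_cent_TI nLy coLy normal_nil_pgroup_abelian.
have cZy : 'Z(G) \subset 'C(<[y]>).
  by rewrite centsC cycle_subG (subsetP _ y Gy) // centsC subsetIr.
(* [~: L, <[y]>] meets 'C(<[y]>) trivially: it is not L, which contains 'Z(G),
   so it lies in 'Z(G) <= 'C(<[y]>) and is trivial. *)
have sRL : [~: L, <[y]>] \subset L by rewrite commg_subl.
have [eqRL | ltRL] := eqVproper sRL.
  by case/negP: ntZ; rewrite -subG1 -tiLy subsetI eqRL sZL.
rewrite -cycle_subG centsC; apply/commG1P; rewrite -tiLy; apply/esym/setIidPl.
exact: subset_trans (normal_nil_pgroup_proper_sub ltRL) cZy.
Qed.

Lemma normal_nil_pgroup_absurd : False.
Proof.
have [t_pr t_dvdY] := t_pr_dvd.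
have [y Yy oy] := Cauchy t_pr t_dvdY.
have [sYG _ _] : [/\ Y \subset G, ~~ (Y \subset 'Z(G)) & 'N_G(Y) != Y].
  by apply/and3P; rewrite -mem_nsn_noncentral.
have [_ nsLZ _] : [/\ L \subset G, ~~ (L \subset 'Z(G)) & 'N_G(L) != L].
  by apply/and3P; rewrite -mem_nsn_noncentral.
have Gy := subsetP sYG y Yy.
have CLy : y \in 'C_G(L) by rewrite inE Gy normal_nil_pgroup_cent.
have [_ sLC SC] := subcent_nsn_noncentral nsLG normal_nil_pgroup_abelian nsLZ.
case/or3P: (Dnum_noncentral_le2_conj small SC SL SY) => /eqP eqCG.
- have tL : t %| #|L| by rewrite -oy order_dvdG // -(conj_class_normal nsLG (esym eqCG)).
  by case/eqP: neq_st; move: (pnat_dvd tL sL); rewrite pnatE // inE => /eqP.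
- have tL : t.-group L by apply: pgroupS sLC _; rewrite /pgroup (card_conj_class_eq eqCG).
  by case/eqP: neq_st; apply: pnat_prime_eq sL tL; apply: nsn_noncentral_card_gt1 SL.
- by move/eqP: eqCG; rewrite (nsn_noncentral_conj_pgroup SL sL tY neq_st).
Qed.

End NormalNilpotentPgroup.

Definition prime_witness (s : nat) : Prop :=
  exists Y : {group gT}, gval Y \in nsn_noncentral G /\ s.-group Y.

Lemma two_prime_witnesses_absurd (s1 s2 : nat) :
  primes #|G : 'Z(G)| = [:: s1; s2] -> prime_witness s1 -> prime_witness s2 -> False.
Proof.
move=> primesGZ [Y1 [S1 sY1]] [Y2 [S2 sY2]].
have ne12 : s1 != s2 by have := primes_uniq #|G : 'Z(G)|; rewrite primesGZ /= inE andbT.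
have solG : solvable G.
  rewrite (series_sol (center_normal G)) abelian_sol ?center_abelian //.
  apply: integral_char.Burnside_p_a_q_b.
  by rewrite card_quotient ?normal_norm ?center_normal // primesGZ.
have nsFZ := solvable_Fitting_noncentral solG nabG.
have SF : gval 'F(G) \in nsn_noncentral G.
  apply: nsn_noncentral_normal (Fitting_normal G) _ nsFZ.
  by apply: contra not_nilpotent_few_classes => /eqP <-; apply: Fitting_nil.
have sZF : 'Z(G) \subset 'F(G).
  exact: Fitting_max (center_normal G) (abelian_nil (center_abelian G)).
have absurd (s t : nat) (Y : {group gT}) :
    s != t -> s.-group 'F(G) -> gval Y \in nsn_noncentral G -> t.-group Y -> False.
  move=> ne_st sF SY tY.
  exact: normal_nil_pgroup_absurd ne_st (Fitting_normal G) (Fitting_nil G) sZF SF sF SY tY.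
case/or3P: (Dnum_noncentral_le2_conj small SF S1 S2) => /eqP eqFY.
- by apply: (absurd s1 s2 Y2 ne12 _ S2 sY2); rewrite /pgroup (card_conj_class_eq eqFY).
- apply: (absurd s2 s1 Y1 _ _ S1 sY1); first by rewrite eq_sym.
  by rewrite /pgroup (card_conj_class_eq eqFY).
- by move/eqP: eqFY; rewrite (nsn_noncentral_conj_pgroup S1 sY1 sY2 ne12).
Qed.

Lemma prime_witnesses_absurd : {in primes #|G : 'Z(G)|, forall s, prime_witness s} -> False.
Proof.
have uniqGZ := primes_uniq #|G : 'Z(G)|.
case primesGZ : (primes #|G : 'Z(G)|) uniqGZ => [|s1 [|s2 [|s3 ps]]] uniqGZ wit.
- case/negP: nabG; apply: abelianS (center_abelian G); rewrite -indexg_eq1 eqn_leq indexg_gt0.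
  by move/eqP: primesGZ; rewrite primes_eq0 andbT -ltnS.
- case/negP: not_nilpotent_few_classes; rewrite -quotient_center_nil.
  apply: (@pgroup_nil _ s1); rewrite /pgroup card_quotient ?normal_norm ?center_normal //.
  by rewrite /pnat indexg_gt0 primesGZ /= inE eqxx.
- by apply: (two_prime_witnesses_absurd primesGZ); apply: wit; rewrite !inE eqxx ?orbT.
move: uniqGZ; rewrite /= !inE !negb_or => /and3P[/and3P[ne12 ne13 _] /andP[ne23 _] _].
have [Y1 [S1 sY1]] : prime_witness s1 by apply: wit; rewrite inE eqxx.
have [Y2 [S2 sY2]] : prime_witness s2 by apply: wit; rewrite !inE eqxx orbT.
have [Y3 [S3 sY3]] : prime_witness s3 by apply: wit; rewrite !inE eqxx !orbT.
case/or3P: (Dnum_noncentral_le2_conj small S1 S2 S3).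
- by rewrite (nsn_noncentral_conj_pgroup S1 sY1 sY2 ne12).
- by rewrite (nsn_noncentral_conj_pgroup S1 sY1 sY3 ne13).
- by rewrite (nsn_noncentral_conj_pgroup S2 sY2 sY3 ne23).
Qed.

Lemma normal_prime_TI_center :
  exists K : {group gT}, [/\ K <| G, prime #|K| & K :&: 'Z(G) = 1].
Proof.
have [all_wit | /allPn[s s_GZ no_wit]] := boolP (all
  (fun s : nat => [exists Y in nsn_noncentral G, s.-group Y]) (primes #|G : 'Z(G)|)).
  case: prime_witnesses_absurd => s /(allP all_wit)/existsP[Y /andP[SY sY]].
  by exists (Group (nsn_noncentral_group SY)).
have [s_pr _ s_dvd] : [/\ prime s, 0 < #|G : 'Z(G)| & s %| #|G : 'Z(G)|].
  by apply/and3P; rewrite -mem_primes.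
have [P sylP] := Sylow_exists s G.
apply: (Sylow_no_witness_normal_prime sylP).
  apply/negP=> sPZ; have /and3P[_ _ s'iP] := sylP.
  rewrite -(Lagrange_index (center_sub G) sPZ) in s'iP.
  by move: (pnat_dvd (dvdn_mulr _ (dvdnn _)) s'iP); rewrite p'natE // s_dvd.
by move=> Y SY; apply: contra no_wit => sY; apply/existsP; exists Y; rewrite SY.
Qed.

Section NormalPrimeSubgroup.

Variable K : {group gT}.
Hypotheses (nsKG : K <| G) (pK : prime #|K|) (tiKZ : K :&: 'Z(G) = 1).

Let sKG : K \subset G := normal_sub nsKG.
Let cZK : 'Z(G) \subset 'C(K) := centsS sKG (subsetIr G _).
Let nKZ : 'Z(G) \subset 'N(K) := cents_norm cZK.
Let ntK : K :!=: 1.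
Proof. by rewrite -cardG_gt1 prime_gt1. Qed.

Let nsKZ : ~~ (K \subset 'Z(G)).
Proof. by apply: contra ntK => sKZ; rewrite -tiKZ (setIidPl sKZ). Qed.

Lemma join_center_TI (W : {group gT}) : W \subset 'Z(G) -> (K <*> W) :&: 'Z(G) = W.
Proof.
move=> sWZ; rewrite norm_joinEr ?(subset_trans sWZ nKZ) // setIC -group_modr //.
by rewrite setIC tiKZ mul1g.
Qed.

Lemma join_center_nsn_noncentral (W : {group gT}) :
  W \subset 'Z(G) -> (K <*> W)%G <| G /\ gval (K <*> W)%G \in nsn_noncentral G.
Proof.
move=> sWZ; have nsKWG : (K <*> W)%G <| G := normalY nsKG (sub_center_normal sWZ).
split=> //; apply: nsn_noncentral_normal => //; last first.
  by apply: contra nsKZ; apply: subset_trans; apply: joing_subl.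
apply: contraNneq nabG => <-; apply: abelianS (genS (setUS K sWZ)) _.
by rewrite abelianY cyclic_abelian ?prime_cyclic ?center_abelian.
Qed.

Lemma center_subgroup_dichotomy (W : {group gT}) : W \subset 'Z(G) -> W :=: 1 \/ W :=: 'Z(G).
Proof.
have join_inj (W1 W2 : {group gT}) : W1 \subset 'Z(G) -> W2 \subset 'Z(G) ->
    K <*> W1 = K <*> W2 -> W1 :=: W2.
  by move=> sW1Z sW2Z eqKW; rewrite -(join_center_TI sW1Z) -(join_center_TI sW2Z) eqKW.
move=> sWZ; have [ns1 S1] := join_center_nsn_noncentral (sub1G 'Z(G)).
have [nsW SW] := join_center_nsn_noncentral sWZ.
have [_ SZ] := join_center_nsn_noncentral (subxx 'Z(G)).
case/or3P: (Dnum_noncentral_le2_conj small S1 SW SZ) => /eqP/(conj_class_normal _) eqKW.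
- by left; apply: join_inj sWZ (sub1G _) (eqKW ns1).
- by case/negP: ntZ; rewrite (join_inj _ _ (subxx _) (sub1G _) (eqKW ns1)).
- by right; apply: join_inj sWZ (subxx _) (esym (eqKW nsW)).
Qed.

Lemma prime_card_center : prime #|'Z(G)|.
Proof. exact: prime_card_of_subgroups ntZ center_subgroup_dichotomy. Qed.

Lemma normal_prime_nsn_noncentral : gval K \in nsn_noncentral G.
Proof.
apply: nsn_noncentral_normal nsKG _ nsKZ; apply: contraNneq nabG => <-.
exact/cyclic_abelian/prime_cyclic.
Qed.

Lemma nsn_noncentral_dichotomy (Y : {group gT}) :
  gval Y \in nsn_noncentral G -> Y :=: K \/ Y :=: K <*> 'Z(G).
Proof.
have SK := normal_prime_nsn_noncentral.
have [nsKZG SKZ] := join_center_nsn_noncentral (subxx 'Z(G)).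
move=> SY; case/or3P: (Dnum_noncentral_le2_conj small SY SK SKZ) => /eqP eqYG.
- by left; rewrite (conj_class_normal nsKG (esym eqYG)).
- by right; rewrite (conj_class_normal nsKZG (esym eqYG)).
case/negP: ntZ; rewrite -subG1 -tiKZ subsetI subxx andbT.
by rewrite (conj_class_normal nsKZG (esym eqYG)) joing_subr.
Qed.

Lemma prime_noncentral_eq (X : {group gT}) :
  X \subset G -> prime #|X| -> ~~ (X \subset 'Z(G)) -> X :=: K.
Proof.
move=> sXG pX nsXZ; have tiXZ := prime_TIg pX nsXZ.
have ntX : X :!=: 1 by rewrite -cardG_gt1 prime_gt1.
case: (nsn_noncentral_dichotomy (nsn_noncentral_TI_center sXG ntX ntZ tiXZ)) => // eqX.
by case/negP: ntZ; rewrite -subG1 -tiXZ subsetI subxx andbT eqX joing_subr.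
Qed.

Lemma card_normal_prime_neq_center : #|K| != #|'Z(G)|.
Proof.
(* Otherwise y * z generates a noncentral subgroup of prime order different from K. *)
apply/eqP=> eqKZ; have [y defK] := cyclicP (prime_cyclic pK).
have [z defZ] := cyclicP (prime_cyclic prime_card_center).
have Ky : y \in K by rewrite defK cycle_id.
have Zz : z \in 'Z(G) by rewrite defZ cycle_id.
have Z'y : y \notin 'Z(G).
  by apply: contra ntK => Zy; rewrite -subG1 -tiKZ subsetI subxx defK cycle_subG.
have Z'yz : y * z \notin 'Z(G) by rewrite groupMr.
have Gy := subsetP sKG y Ky.
have czy : commute y z by move: Zz; rewrite inE => /andP[_ /centP cGz]; apply/esym/cGz.
have oyz : #[y * z] = #|K|.
  apply: nt_prime_order pK _ _; last by apply: contraNneq Z'yz => ->; apply: group1.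
  have oy : #[y] = #|K| by rewrite orderE -defK.
  have oz : #[z] = #|K| by rewrite orderE -defZ eqKZ.
  by rewrite expgMn // -{1}oy expg_order -oz expg_order mulg1.
have Gyz : y * z \in G := groupM Gy (subsetP (center_sub G) z Zz).
have /prime_noncentral_eq eqyzK : <[y * z]> \subset G by rewrite cycle_subG.
have Kz : z \in K.
  by rewrite -(groupMl _ Ky) -eqyzK ?cycle_id // ?cycle_subG // -orderE oyz.
by case/negP: ntZ; rewrite -subG1 -tiKZ subsetI subxx andbT defZ cycle_subG.
Qed.

Lemma prime_dvd_card_cases (r : nat) :
  prime r -> r %| #|G| -> r = #|K| \/ r = #|'Z(G)|.
Proof.
move=> r_pr r_dvd; have [-> | neqrq] := eqVneq r #|'Z(G)|; first by right.
left; have [x Gx ox] := Cauchy r_pr r_dvd.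
have nsxZ : ~~ (<[x]> \subset 'Z(G)).
  apply: contra neqrq; rewrite cycle_subG => /order_dvdG.
  by rewrite ox dvdn_prime2 ?prime_card_center.
have px : prime #|<[x]>| by rewrite -orderE ox.
have sxG : <[x]> \subset G by rewrite cycle_subG.
by rewrite -ox orderE (prime_noncentral_eq sxG px nsxZ).
Qed.

Lemma normal_prime_Sylow : #|K|.-Sylow(G) K.
Proof.
have [P sylP] := Sylow_exists #|K| G; have /and3P[sPG pP _] := sylP.
have sKP : K \subset P.
  apply: subset_trans (pcore_sub_Hall sylP).
  by apply: pcore_max nsKG; rewrite /pgroup pnat_id.
suff eqPK : P :=: K by rewrite -{2}(group_inj eqPK).
have nsZP : ~~ ('Z(G) \subset P).
  apply: contra card_normal_prime_neq_center => sZP.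
  have qZ : #|'Z(G)|.-group 'Z(G) by rewrite /pgroup pnat_id ?prime_card_center.
  apply/eqP/(pnat_prime_eq _ (pgroupS sZP pP) qZ).
  by rewrite cardG_gt1.
have SP : gval P \in nsn_noncentral G.
  by rewrite nsn_noncentral_center_nsub //; apply: contra nsKZ; apply: subset_trans.
case: (nsn_noncentral_dichotomy SP) => // eqP.
by case/negP: nsZP; rewrite eqP joing_subr.
Qed.

Lemma subcent_normal_prime : 'C_G(K) = K <*> 'Z(G).
Proof.
have abK : abelian K := cyclic_abelian (prime_cyclic pK).
have [_ _ SC] := subcent_nsn_noncentral nsKG abK nsKZ.
case: (nsn_noncentral_dichotomy SC) => // eqCK.
by case/negP: ntZ; rewrite -subG1 -tiKZ subsetI subxx andbT -eqCK subsetI center_sub.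
Qed.

Lemma Dnum_noncentral_normal_prime : Dnum_noncentral G = 2.
Proof.
have [nsKZG SKZ] := join_center_nsn_noncentral (subxx 'Z(G)).
rewrite /Dnum_noncentral (_ : nsn_noncentral G = [set gval K; gval (K <*> 'Z(G))]); last first.
  apply/setP=> Y; rewrite in_set2; apply/idP/idP => [SY | /orP[] /eqP->] //.
    case: (nsn_noncentral_dichotomy (Y := Group (nsn_noncentral_group SY)) SY).
      by move=> /= ->; rewrite eqxx.
    by move=> /= ->; rewrite eqxx orbT.
  exact: normal_prime_nsn_noncentral.
rewrite imsetU1 imset_set1 cards2.
suff -> : gval K :^: G != gval (K <*> 'Z(G)) :^: G by [].
apply/eqP=> /(conj_class_normal nsKG) eqKZK.
by case/negP: ntZ; rewrite -subG1 -tiKZ subsetI subxx andbT -eqKZK joing_subr.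
Qed.

Section CenterSylow.

Variable Q : {group gT}.
Hypothesis sylQ : #|'Z(G)|.-Sylow(G) Q.

Lemma Sylow_center_complement : [/\ 'Z(G) \subset Q, K :&: Q = 1 & K * Q = G].
Proof.
have /and3P[sQG qQ q'iQ] := sylQ; have q_pr := prime_card_center.
have sZQ : 'Z(G) \subset Q.
  apply: subset_trans (pcore_sub_Hall sylQ); apply: pcore_max (center_normal G).
  by rewrite /pgroup pnat_id.
have tiKQ : K :&: Q = 1.
  apply: coprime_TIg; apply: (@pnat_coprime #|'Z(G)|^'); last by rewrite pnatNK.
  by rewrite pnatE // !inE card_normal_prime_neq_center.
have pi_idx : #|K|.-nat #|G : Q|.
  apply/(pnatP _ (indexg_gt0 G Q)) => r r_pr r_dvd.
  have [-> | eqrq] := prime_dvd_card_cases r_pr (dvdn_trans r_dvd (dvdn_indexg G Q)).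
    by rewrite inE.
  by move: (pnat_dvd r_dvd q'iQ); rewrite eqrq pnatE // !inE /= eqxx.
have idx_dvd : #|G : Q| %| #|K|.
  rewrite -(part_pnat_id pi_idx); move: (partn_dvd #|K| (cardG_gt0 G) (dvdn_indexg G Q)).
  by rewrite -(card_Hall normal_prime_Sylow).
split=> //; apply/eqP; rewrite eqEcard mul_subG //= TI_cardMg //.
by rewrite -(Lagrange sQG) mulnC leq_pmul2r // dvdn_leq.
Qed.

Lemma Sylow_center_proper_sub (R : {group gT}) : R \proper Q -> R \subset 'Z(G).
Proof.
have [_ tiKQ _] := Sylow_center_complement; have /and3P[sQG qQ _] := sylQ.
move=> ltRQ; apply/negPn/negP=> nsRZ.
have SR := nsn_noncentral_nil ltRQ sQG (pgroup_nil qQ) nsRZ.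
have sKR : K \subset R by case: (nsn_noncentral_dichotomy SR) => ->; rewrite ?joing_subl.
by case/negP: ntK; rewrite -subG1 -tiKQ subsetI subxx (subset_trans sKR (proper_sub ltRQ)).
Qed.

Lemma Sylow_center_neq : Q :!=: 'Z(G).
Proof.
have [_ _ defG] := Sylow_center_complement.
apply: contraNneq nabG => eqQZ; rewrite -defG eqQZ -norm_joinEr //.
by rewrite abelianY center_abelian cyclic_abelian ?prime_cyclic // centsC.
Qed.

Lemma Sylow_center_cyclic : cyclic Q /\ #|Q| = (#|'Z(G)| ^ 2)%N.
Proof.
have [sZQ _ _] := Sylow_center_complement; have q_pr := prime_card_center.
have nsQZ : ~~ (Q \subset 'Z(G)).
  by apply: contra Sylow_center_neq => sQZ; rewrite eqEsubset sQZ sZQ.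
have [x Qx Z'x] := subsetPn nsQZ.
have defQ : <[x]> = Q :> {set gT}.
  apply/eqP; rewrite eqEproper cycle_subG Qx; apply/negP=> ltxQ.
  by case/negP: Z'x; rewrite -cycle_subG Sylow_center_proper_sub.
split; first by rewrite -defQ cycle_cyclic.
have oxQ : #[x] = #|Q| by rewrite orderE defQ.
have qx : #|'Z(G)| %| #[x] by rewrite oxQ cardSg.
have ltxqQ : <[x ^+ #|'Z(G)|]> \proper Q.
  rewrite properEcard -defQ cycleX -!orderE orderXdiv //.
  by rewrite ltn_Pdiv ?prime_gt1 ?order_gt0.
have Zxq : x ^+ #|'Z(G)| \in 'Z(G) by rewrite -cycle_subG Sylow_center_proper_sub.
have /primeP[_ /(_ _ (order_dvdG Zxq))] := q_pr.
rewrite orderXdiv // -oxQ => /orP[/eqP x_q1 | /eqP x_q].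
  case/negP: Sylow_center_neq.
  by rewrite eq_sym eqEcard sZQ -oxQ -(divnK qx) x_q1 mul1n leqnn.
by rewrite -(divnK qx) x_q mulnn.
Qed.

Lemma Sylow_center_cent : 'C_Q(K) = 'Z(G).
Proof.
have [sZQ tiKQ _] := Sylow_center_complement; have /andP[sQG _] := sylQ.
rewrite -(setIidPl sQG) -setIA subcent_normal_prime norm_joinEr // -group_modr //.
by rewrite setIC tiKQ mul1g.
Qed.

Lemma prime_center_dvd_pred : #|'Z(G)| %| #|K|.-1.
Proof.
have /andP[sQG _] := sylQ; have nKQ := subset_trans sQG (normal_norm nsKG).
have [sZQ _ _] := Sylow_center_complement; have [_ oQ] := Sylow_center_cyclic.
have iQZ : #|Q : 'Z(G)| = #|'Z(G)|.
  by apply/eqP; rewrite -(eqn_pmul2l (cardG_gt0 'Z(G))) Lagrange // oQ mulnn.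
(* Q / 'C_Q(K) embeds in Aut K, which has order p - 1. *)
have := cardSg (Aut_conj_aut K Q).
rewrite card_morphim ker_conj_aut (setIidPr nKQ) -indexgI Sylow_center_cent iQZ.
by rewrite card_Aut_cyclic ?prime_cyclic // totient_prime.
Qed.

End CenterSylow.

End NormalPrimeSubgroup.

Lemma few_noncentral_classes_structure :
  exists K H : {group gT},
    [/\ K <| G, prime #|K|, prime #|'Z(G)|, #|'Z(G)| %| #|K|.-1 & cyclic H] /\
    [/\ #|H| = (#|'Z(G)| ^ 2)%N, K * H = G, 'C_H(K) = 'Z(G) & Dnum_noncentral G = 2].
Proof.
have [K [nsKG pK tiKZ]] := normal_prime_TI_center.
have [Q sylQ] := Sylow_exists #|'Z(G)| G.
have [cycQ oQ] := Sylow_center_cyclic nsKG pK tiKZ sylQ.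
have [_ _ defG] := Sylow_center_complement nsKG pK tiKZ sylQ.
exists K, Q; split; split => //.
- exact: prime_card_center nsKG pK tiKZ.
- exact: (prime_center_dvd_pred nsKG pK tiKZ sylQ).
- exact: (Sylow_center_cent nsKG pK tiKZ sylQ).
- exact: Dnum_noncentral_normal_prime nsKG pK tiKZ.
Qed.

End FewNoncentralClasses.

Unset Implicit Arguments.

Theorem mainTheorem14 (gT : finGroupType) (G : {group gT}) (n : nat) :
  ~~ abelian G -> 'Z(G) != 1 -> Dnum G = n ->
  (exists k : nat, 4 <= k /\ Dnum 'Z(G) + k = n)
  \/
  (exists (K H : {group gT}) (p q : nat),
     [/\ prime p, prime q, q %| p.-1, K <| G & #|K| = p] /\
     [/\ cyclic H, #|H| = (q ^ 2)%N, K * H = G, 'C_H(K) = 'Z(G) & #|'Z(G)| = q] /\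
     Dnum G = 3 /\ Dnum 'Z(G) = 0).
Proof.
move=> nabG ntZ DnumG.
have neZG : 'Z(G) :!=: G by apply: contraNneq nabG => <-; apply: center_abelian.
have splitG := Dnum_center_split neZG ntZ.
have [gt2 | small] := ltnP 2 (Dnum_noncentral G).
  by left; exists (Dnum_noncentral G).+1; rewrite -DnumG splitG -addnA add1n.
have [K [H [[nsKG pK pZ dvd_qp cycH] [oH defG cHK cn2]]]] :=
  few_noncentral_classes_structure nabG ntZ small.
have DZ := Dnum_prime pZ.
by right; exists K, H, #|K|, #|'Z(G)|; rewrite splitG DZ cn2.
Qed.
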